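(* Let $\Sigma$ be a signature, $T$ a monad on sets carrying a continuous $\Sigma$-algebra structure, and $\Gamma$ a relator for the monad $T$ that is inductive and respects $\Sigma$. Let $\precsim^H=(\precsim^H_{\mathcal{T}},\precsim^H_{\mathcal{V}})$ be the Howe extension of applicative $\Gamma$-similarity. If $M,N$ are closed terms with $\emptyset\vdash M\precsim^H_{\mathcal{T}}N$ and $M\Downarrow_n X$, then $X\,\Gamma(\precsim^H_{\mathcal{V}})\,[\![N]\!]$, where $\precsim^H_{\mathcal{V}}$ here denotes its closed part $\{(V,W)\mid\emptyset\vdash V\precsim^H_{\mathcal{V}}W\}$.
   Context: An $\omega$CPPO is a poset with least element $\bot$ in which every $\omega$-chain has a lub; continuous = monotone and preserving such lubs. $T$ (unit $\eta$, bind $u\texttt{>>=}f$) carries a continuous $\Sigma$-algebra structure if each $TX$ is an $\omega$CPPO, bind is continuous in both arguments, and each $\sigma\in\Sigma$ of arity $k$ is interpreted by a continuous $\sigma^T:(TX)^k\to TX$. A relator $\Gamma$ for $T$ assigns to each $R\subseteq X\times Y$ a relation $\Gamma R\subseteq TX\times TY$ with: $=_{TX}\subseteq\Gamma(=_X)$; $\Gamma S\circ\Gamma R\subseteq\Gamma(S\circ R)$; $\Gamma((f\times g)^{-1}R)=(Tf\times Tg)^{-1}\Gamma R$ where $(f\times g)^{-1}R=\{(z,w)\mid f(z)\,R\,g(w)\}$; monotone in $R$; $x\,R\,y\Rightarrow\eta(x)\,\Gamma R\,\eta(y)$; and if $x\,R\,y\Rightarrow f(x)\,\Gamma S\,g(y)$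 for all $x,y$ then $u\,\Gamma R\,v\Rightarrow(u\texttt{>>=}f)\,\Gamma S\,(v\texttt{>>=}g)$. Inductive: for every $R$, $\bot\,\Gamma R\,v$ for all $v$, and for every $\omega$-chain $(u_n)$, $(\forall n.\ u_n\,\Gamma R\,v)\Rightarrow\bigsqcup_n u_n\,\Gamma R\,v$. Respects $\Sigma$: $u_i\,\Gamma R\,v_i$ for all $i$ implies $\sigma^T(\vec u)\,\Gamma R\,\sigma^T(\vec v)$. Terms/values: $M,N::=\mathsf{return}\,V\mid VW\mid(M\ \mathsf{to}\ x.N)\mid\sigma(M_1,\dots,M_{\alpha(\sigma)})$, $V,W::=x\mid\lambda x.M$, modulo $\alpha$-equivalence; $M[V/x]$ substitution; $\mathcal{T}_0,\mathcal{V}_0$ closed terms/values; $\mathcal{T}(\bar x),\mathcal{V}(\bar x)$ those with free variables in $\bar x$. Judgment $M\Downarrow_n X$ ($M$ closed, $X\in T\mathcal{V}_0$) defined inductively: $M\Downarrow_0\bot$; $\mathsf{return}\,V\Downarrow_{n+1}\eta(V)$; if $M\Downarrow_n X$ and $N[V/x]\Downarrow_n Y_V$ for every closed $V$ then $(M\ \mathsf{to}\ x.N)\Downarrow_{n+1}X\texttt{>>=}(V\mapsto Y_V)$; if $M[V/x]\Downarrow_n X$ then $(\lambda x.M)V\Downarrow_{n+1}X$; if $M_i\Downarrow_n X_i$ ($i\le k$) then $\sigma(M_1,\dots,M_k)\Downarrow_{n+1}\sigma^T(X_1,\dots,X_k)$. Also $M^{(0)}=\bot$, $(\mathsf{return}\,V)^{(n+1)}=\eta(V)$,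 $((\lambda x.M)V)^{(n+1)}=(M[V/x])^{(n)}$, $(M\ \mathsf{to}\ x.N)^{(n+1)}=M^{(n)}\texttt{>>=}(V\mapsto(N[V/x])^{(n)})$, $(\sigma(\vec M))^{(n+1)}=\sigma^T(M_1^{(n)},\dots)$; this is an $\omega$-chain and $[\![M]\!]=\bigsqcup_nM^{(n)}$. A closed relation $R=(R_{\mathcal{T}}\subseteq\mathcal{T}_0\times\mathcal{T}_0,R_{\mathcal{V}}\subseteq\mathcal{V}_0\times\mathcal{V}_0)$ is an applicative $\Gamma$-simulation if $M\,R_{\mathcal{T}}\,N\Rightarrow[\![M]\!]\,\Gamma R_{\mathcal{V}}\,[\![N]\!]$ and $V\,R_{\mathcal{V}}\,W\Rightarrow VU\,R_{\mathcal{T}}\,WU$ for every closed value $U$. Applicative $\Gamma$-similarity $\precsim=(\precsim_{\mathcal{T}},\precsim_{\mathcal{V}})$ is the largest one. Its open extension $\precsim^\circ$: $\bar x\vdash M\precsim^\circ_{\mathcal{T}}N$ iff $M,N\in\mathcal{T}(\bar x)$ and $M[\bar V/\bar x]\precsim_{\mathcal{T}}N[\bar V/\bar x]$ for all closed values $\bar V$ substituted simultaneously for $\bar x$ (similarly for values). The Howe extension $\precsim^H$ is the least pair of sets of triples $(\bar x,\cdot,\cdot)$ closed under: (H1) if $x\in\bar x$ and $\bar x\vdash x\precsim^\circ_{\mathcal{V}}V$ then $\bar x\vdash x\precsim^H_{\mathcal{V}}V$; (H2) if $x\notin\bar x$, $\bar x\cup\{x\}\vdash M\precsim^H_{\mathcal{T}}L$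 and $\bar x\vdash\lambda x.L\precsim^\circ_{\mathcal{V}}V$ then $\bar x\vdash\lambda x.M\precsim^H_{\mathcal{V}}V$; (H3) if $\bar x\vdash V\precsim^H_{\mathcal{V}}W$ and $\bar x\vdash\mathsf{return}\,W\precsim^\circ_{\mathcal{T}}N$ then $\bar x\vdash\mathsf{return}\,V\precsim^H_{\mathcal{T}}N$; (H4) if $\bar x\vdash V\precsim^H_{\mathcal{V}}V'$, $\bar x\vdash W\precsim^H_{\mathcal{V}}W'$ and $\bar x\vdash V'W'\precsim^\circ_{\mathcal{T}}N$ then $\bar x\vdash VW\precsim^H_{\mathcal{T}}N$; (H5) if $\bar x\vdash M\precsim^H_{\mathcal{T}}L$, $\bar x\cup\{x\}\vdash M'\precsim^H_{\mathcal{T}}L'$ and $\bar x\vdash(L\ \mathsf{to}\ x.L')\precsim^\circ_{\mathcal{T}}N$ then $\bar x\vdash(M\ \mathsf{to}\ x.M')\precsim^H_{\mathcal{T}}N$; (H6) if $\bar x\vdash M_k\precsim^H_{\mathcal{T}}N_k$ for all $k\le n$ and $\bar x\vdash\sigma(N_1,\dots,N_n)\precsim^\circ_{\mathcal{T}}N$ then $\bar x\vdash\sigma(M_1,\dots,M_n)\precsim^H_{\mathcal{T}}N$. *)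

From mathcomp Require Import all_boot.

Set Implicit Arguments.
Unset Strict Implicit.
Unset Printing Implicit Defensive.

(* Syntax: fine-grained call-by-value lambda calculus with algebraic        *)
(* operations of a signature (S, ar).  Terms are taken modulo alpha via     *)
(* de Bruijn indices: in (Seq M N) = (M to x. N) and in (Lam M) = (lambda   *)
(* x. M) the bound variable is index 0.  A context xbar of n distinct       *)
(* variables is represented by the number n (indices 0 .. n-1).             *)

Section Syntax.
Variables (Sg : Type) (ar : Sg -> nat).

Inductive tm : Type :=
| Ret : vl -> tm
| App : vl -> vl -> tm
| Seq : tm -> tm -> tm
| Op : forall s : Sg, ('I_(ar s) -> tm) -> tm
with vl : Type :=
| Var : nat -> vl
| Lam : tm -> vl.

(* scoping: tm_sc n M  <=>  M in T(xbar) with |xbar| = n *)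
Fixpoint tm_sc (n : nat) (M : tm) {struct M} : bool :=
  match M with
  | Ret v => vl_sc n v
  | App v w => vl_sc n v && vl_sc n w
  | Seq M1 N => tm_sc n M1 && tm_sc n.+1 N
  | Op s f => [forall i, tm_sc n (f i)]
  end
with vl_sc (n : nat) (v : vl) {struct v} : bool :=
  match v with
  | Var x => x < n
  | Lam M => tm_sc n.+1 M
  end.

Definition tm_closed (M : tm) : bool := tm_sc 0 M.
Definition vl_closed (v : vl) : bool := vl_sc 0 v.

Definition cvl : Type := {v : vl | vl_closed v}.

Definition upren (r : nat -> nat) (x : nat) : nat :=
  match x with 0 => 0 | y.+1 => (r y).+1 end.

Fixpoint ren_tm (r : nat -> nat) (M : tm) {struct M} : tm :=
  match M with
  | Ret v => Ret (ren_vl r v)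
  | App v w => App (ren_vl r v) (ren_vl r w)
  | Seq M1 N => Seq (ren_tm r M1) (ren_tm (upren r) N)
  | Op s f => Op (fun i => ren_tm r (f i))
  end
with ren_vl (r : nat -> nat) (v : vl) {struct v} : vl :=
  match v with
  | Var x => Var (r x)
  | Lam M => Lam (ren_tm (upren r) M)
  end.

Definition up (sg : nat -> vl) (x : nat) : vl :=
  match x with 0 => Var 0 | y.+1 => ren_vl S (sg y) end.

Fixpoint subst_tm (sg : nat -> vl) (M : tm) {struct M} : tm :=
  match M with
  | Ret v => Ret (subst_vl sg v)
  | App v w => App (subst_vl sg v) (subst_vl sg w)
  | Seq M1 N => Seq (subst_tm sg M1) (subst_tm (up sg) N)
  | Op s f => Op (fun i => subst_tm sg (f i))
  end
with subst_vl (sg : nat -> vl) (v : vl) {struct v} : vl :=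
  match v with
  | Var x => sg x
  | Lam M => Lam (subst_tm (up sg) M)
  end.

Definition scons (v : vl) (sg : nat -> vl) (x : nat) : vl :=
  match x with 0 => v | y.+1 => sg y end.

Definition subst1 (M : tm) (v : vl) : tm := subst_tm (scons v Var) M.

End Syntax.

Arguments Var {Sg ar}.

Record MonadData (Sg : Type) (ar : Sg -> nat) := {
  T : Type -> Type;
  ret : forall X : Type, X -> T X;
  bind : forall X Y : Type, T X -> (X -> T Y) -> T Y;
  le : forall X : Type, T X -> T X -> Prop;
  bot : forall X : Type, T X;
  lub : forall X : Type, (nat -> T X) -> T X;
  op : forall (X : Type) (s : Sg), ('I_(ar s) -> T X) -> T X
}.

Arguments T {Sg ar} m X.
Arguments ret {Sg ar} m {X} x.
Arguments bind {Sg ar} m {X Y} u f.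
Arguments le {Sg ar} m {X} u v.
Arguments bot {Sg ar} m {X}.
Arguments lub {Sg ar} m {X} c.
Arguments op {Sg ar} m {X} s us.

Section MonadProps.
Variables (Sg : Type) (ar : Sg -> nat) (m : MonadData ar).

Definition is_monad : Prop :=
  (forall (X Y : Type) (x : X) (f : X -> T m Y), bind m (ret m x) f = f x) /\
  (forall (X : Type) (u : T m X), bind m u (fun x => ret m x) = u) /\
  (forall (X Y Z : Type) (u : T m X) (f : X -> T m Y) (g : Y -> T m Z),
      bind m (bind m u f) g = bind m u (fun x => bind m (f x) g)).

Definition chain (X : Type) (c : nat -> T m X) : Prop :=
  forall n, le m (c n) (c n.+1).

Definition is_wcppo : Prop :=
  forall X : Type,
    (forall u : T m X, le m u u) /\
    (forall u v w : T m X, le m u v -> le m v w -> le m u w) /\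
    (forall u v : T m X, le m u v -> le m v u -> u = v) /\
    (forall u : T m X, le m (bot m) u) /\
    (forall c : nat -> T m X, chain c ->
       (forall n, le m (c n) (lub m c)) /\
       (forall u, (forall n, le m (c n) u) -> le m (lub m c) u)).

Definition bind_continuous : Prop :=
  (forall (X Y : Type) (u u' : T m X) (f : X -> T m Y),
      le m u u' -> le m (bind m u f) (bind m u' f)) /\
  (forall (X Y : Type) (u : T m X) (f g : X -> T m Y),
      (forall x, le m (f x) (g x)) -> le m (bind m u f) (bind m u g)) /\
  (forall (X Y : Type) (c : nat -> T m X) (f : X -> T m Y),
      chain c -> bind m (lub m c) f = lub m (fun n => bind m (c n) f)) /\
  (forall (X Y : Type) (u : T m X) (fc : nat -> X -> T m Y),
      (forall x, chain (fun n => fc n x)) ->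
      bind m u (fun x => lub m (fun n => fc n x)) = lub m (fun n => bind m u (fc n))).

Definition ops_continuous : Prop :=
  (forall (X : Type) (s : Sg) (us vs : 'I_(ar s) -> T m X),
      (forall i, le m (us i) (vs i)) -> le m (op m s us) (op m s vs)) /\
  (forall (X : Type) (s : Sg) (cs : nat -> 'I_(ar s) -> T m X),
      (forall i, chain (fun n => cs n i)) ->
      op m s (fun i => lub m (fun n => cs n i)) = lub m (fun n => op m s (cs n))).

Definition cont_sigma_monad : Prop :=
  is_monad /\ is_wcppo /\ bind_continuous /\ ops_continuous.

Definition RelatorT : Type :=
  forall X Y : Type, (X -> Y -> Prop) -> T m X -> T m Y -> Prop.

Definition fmap (X Y : Type) (f : X -> Y) (u : T m X) : T m Y :=
  bind m u (fun x => ret m (f x)).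

Definition is_relator (G : RelatorT) : Prop :=
  (forall (X : Type) (u : T m X), G X X (@eq X) u u) /\
  (forall (X Y Z : Type) (R : X -> Y -> Prop) (R' : Y -> Z -> Prop) u v w,
      G _ _ R u v -> G _ _ R' v w ->
      G _ _ (fun x z => exists y, R x y /\ R' y z) u w) /\
  (forall (X Y X' Y' : Type) (f : X' -> X) (g : Y' -> Y) (R : X -> Y -> Prop) u v,
      G _ _ (fun z w => R (f z) (g w)) u v <-> G _ _ R (fmap f u) (fmap g v)) /\
  (forall (X Y : Type) (R R' : X -> Y -> Prop),
      (forall x y, R x y -> R' x y) -> forall u v, G _ _ R u v -> G _ _ R' u v) /\
  (forall (X Y : Type) (R : X -> Y -> Prop) x y, R x y -> G _ _ R (ret m x) (ret m y)) /\
  (forall (X Y X' Y' : Type) (R : X -> Y -> Prop) (R' : X' -> Y' -> Prop)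
          (f : X -> T m X') (g : Y -> T m Y') u v,
      (forall x y, R x y -> G _ _ R' (f x) (g y)) ->
      G _ _ R u v -> G _ _ R' (bind m u f) (bind m v g)).

Definition relator_inductive (G : RelatorT) : Prop :=
  forall (X Y : Type) (R : X -> Y -> Prop),
    (forall v : T m Y, G _ _ R (bot m) v) /\
    (forall (c : nat -> T m X) (v : T m Y),
        chain c -> (forall n, G _ _ R (c n) v) -> G _ _ R (lub m c) v).

Definition relator_respects_sig (G : RelatorT) : Prop :=
  forall (X Y : Type) (R : X -> Y -> Prop) (s : Sg)
         (us : 'I_(ar s) -> T m X) (vs : 'I_(ar s) -> T m Y),
    (forall i, G _ _ R (us i) (vs i)) -> G _ _ R (op m s us) (op m s vs).

Notation tm := (tm ar).
Notation vl := (vl ar).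
Notation cvl := (cvl ar).

Inductive eval : tm -> nat -> T m cvl -> Prop :=
| eval0 (M : tm) : eval M 0 (bot m)
| evalRet (V : cvl) (n : nat) : eval (Ret (val V)) n.+1 (ret m V)
| evalSeq (M N : tm) (n : nat) (X : T m cvl) (Y : cvl -> T m cvl) :
    eval M n X -> (forall V : cvl, eval (subst1 N (val V)) n (Y V)) ->
    eval (Seq M N) n.+1 (bind m X Y)
| evalApp (M : tm) (V : cvl) (n : nat) (X : T m cvl) :
    eval (subst1 M (val V)) n X -> eval (App (Lam M) (val V)) n.+1 X
| evalOp (s : Sg) (Ms : 'I_(ar s) -> tm) (n : nat) (Xs : 'I_(ar s) -> T m cvl) :
    (forall i, eval (Ms i) n (Xs i)) -> eval (Op Ms) n.+1 (op m s Xs).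

(* approximants M^(n) (meaningful for closed M) *)
Fixpoint approx (n : nat) (M : tm) {struct n} : T m cvl :=
  match n with
  | 0 => bot m
  | n'.+1 =>
    match M with
    | Ret v => match (insub v : option cvl) with Some V => ret m V | None => bot m end
    | App (Lam M') v => approx n' (subst1 M' v)
    | App (Var _) _ => bot m
    | Seq M1 N => bind m (approx n' M1) (fun V : cvl => approx n' (subst1 N (val V)))
    | @Op _ _ s Ms => op m s (fun i => approx n' (Ms i))
    end
  end.

Definition denot (M : tm) : T m cvl := lub m (fun n => approx n M).

Variable G : RelatorT.

Definition liftV (RV : vl -> vl -> Prop) : cvl -> cvl -> Prop :=
  fun V W => RV (val V) (val W).

Definition closed_rel (RT : tm -> tm -> Prop) (RV : vl -> vl -> Prop) : Prop :=
  (forall M N, RT M N -> tm_closed M /\ tm_closed N) /\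
  (forall V W, RV V W -> vl_closed V /\ vl_closed W).

Definition app_simulation (RT : tm -> tm -> Prop) (RV : vl -> vl -> Prop) : Prop :=
  closed_rel RT RV /\
  (forall M N, RT M N -> G (liftV RV) (denot M) (denot N)) /\
  (forall V W, RV V W -> forall U : cvl, RT (App V (val U)) (App W (val U))).

(* applicative Gamma-similarity = the largest applicative Gamma-simulation
   (union of all of them) *)
Definition simT (M N : tm) : Prop :=
  exists RT RV, app_simulation RT RV /\ RT M N.
Definition simV (V W : vl) : Prop :=
  exists RT RV, app_simulation RT RV /\ RV V W.

Definition openT (n : nat) (M N : tm) : Prop :=
  tm_sc n M /\ tm_sc n N /\
  forall sv : nat -> cvl,
    simT (subst_tm (fun i => val (sv i)) M) (subst_tm (fun i => val (sv i)) N).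
Definition openV (n : nat) (V W : vl) : Prop :=
  vl_sc n V /\ vl_sc n W /\
  forall sv : nat -> cvl,
    simV (subst_vl (fun i => val (sv i)) V) (subst_vl (fun i => val (sv i)) W).

Inductive howeT : nat -> tm -> tm -> Prop :=
| H3 (n : nat) (V W : vl) (N : tm) :
    howeV n V W -> openT n (Ret W) N -> howeT n (Ret V) N
| H4 (n : nat) (V V' W W' : vl) (N : tm) :
    howeV n V V' -> howeV n W W' -> openT n (App V' W') N -> howeT n (App V W) N
| H5 (n : nat) (M L M' L' N : tm) :
    howeT n M L -> howeT n.+1 M' L' -> openT n (Seq L L') N -> howeT n (Seq M M') N
| H6 (n : nat) (s : Sg) (Ms Ns : 'I_(ar s) -> tm) (N : tm) :
    (forall k, howeT n (Ms k) (Ns k)) -> openT n (Op Ns) N -> howeT n (Op Ms) N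
with howeV : nat -> vl -> vl -> Prop :=
| H1 (n x : nat) (V : vl) :
    x < n -> openV n (Var x) V -> howeV n (Var x) V
| H2 (n : nat) (M L : tm) (V : vl) :
    howeT n.+1 M L -> openV n (Lam L) V -> howeV n (Lam M) V.

End MonadProps.

Arguments eval {Sg ar} m _ _ _.
Arguments approx {Sg ar} m n M.

(* Howe's method. Inverting M ≾^H N yields a
   term L built from Howe-related immediate subterms with L ≾° N; the relator clause
   for unit, bind, the operations or bottom relates X to [[L]], which continuity of
   bind and of the σ^T lets us compute compositionally; Γ-composition with
   [[L]] Γ(≾) [[N]] and the inclusion ≾^H ∘ ≾ ⊆ ≾^H then pass from L to N. The β and
   sequencing cases need ≾^H to be closed under substitution of ≾^H-related values,
   which rests on reflexivity, transitivity and substitutivity of the open extension. *)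

From mathcomp Require Import all_boot.
From Stdlib Require Import FunctionalExtensionality.

Set Implicit Arguments.
Unset Strict Implicit.
Unset Printing Implicit Defensive.

Scheme tm_mutind := Induction for tm Sort Prop
  with vl_mutind := Induction for vl Sort Prop.
Combined Scheme tm_vl_mutind from tm_mutind, vl_mutind.

Section Substitution.
Variables (Sg : Type) (ar : Sg -> nat).
Notation tm := (tm ar).
Notation vl := (vl ar).

Lemma upren_comp (xi zeta : nat -> nat) :
  upren xi \o upren zeta = upren (xi \o zeta).
Proof. by apply: functional_extensionality; case. Qed.

Lemma ren_ren :
  (forall (M : tm) xi zeta, ren_tm xi (ren_tm zeta M) = ren_tm (xi \o zeta) M) /\
  (forall (v : vl) xi zeta, ren_vl xi (ren_vl zeta v) = ren_vl (xi \o zeta) v).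
Proof.
apply: tm_vl_mutind => [v IHv|v IHv w IHw|M IHM N IHN|s f IHf|x|M IHM] xi zeta /=;
  rewrite ?IHv ?IHw ?IHM ?IHN ?upren_comp //.
by congr Op; apply: functional_extensionality => i; apply: IHf.
Qed.

Lemma up_upren (sg : nat -> vl) xi : up sg \o upren xi = up (sg \o xi).
Proof. by apply: functional_extensionality; case. Qed.

Lemma subst_ren :
  (forall (M : tm) sg xi, subst_tm sg (ren_tm xi M) = subst_tm (sg \o xi) M) /\
  (forall (v : vl) sg xi, subst_vl sg (ren_vl xi v) = subst_vl (sg \o xi) v).
Proof.
apply: tm_vl_mutind => [v IHv|v IHv w IHw|M IHM N IHN|s f IHf|x|M IHM] sg xi /=;
  rewrite ?IHv ?IHw ?IHM ?IHN ?up_upren //.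
by congr Op; apply: functional_extensionality => i; apply: IHf.
Qed.

Lemma upren_up (sg : nat -> vl) xi :
  ren_vl (upren xi) \o up sg = up (ren_vl xi \o sg).
Proof. by apply: functional_extensionality; case=> //= n; rewrite !(proj2 ren_ren). Qed.

Lemma ren_subst :
  (forall (M : tm) sg xi, ren_tm xi (subst_tm sg M) = subst_tm (ren_vl xi \o sg) M) /\
  (forall (v : vl) sg xi, ren_vl xi (subst_vl sg v) = subst_vl (ren_vl xi \o sg) v).
Proof.
apply: tm_vl_mutind => [v IHv|v IHv w IHw|M IHM N IHN|s f IHf|x|M IHM] sg xi /=;
  rewrite ?IHv ?IHw ?IHM ?IHN ?upren_up //.
by congr Op; apply: functional_extensionality => i; apply: IHf.
Qed.

Lemma up_comp (sg tau : nat -> vl) :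
  subst_vl (up sg) \o up tau = up (subst_vl sg \o tau).
Proof.
apply: functional_extensionality; case=> //= n.
by rewrite (proj2 subst_ren) (proj2 ren_subst).
Qed.

Lemma subst_subst :
  (forall (M : tm) sg tau, subst_tm sg (subst_tm tau M) = subst_tm (subst_vl sg \o tau) M) /\
  (forall (v : vl) sg tau, subst_vl sg (subst_vl tau v) = subst_vl (subst_vl sg \o tau) v).
Proof.
apply: tm_vl_mutind => [v IHv|v IHv w IHw|M IHM N IHN|s f IHf|x|M IHM] sg tau /=;
  rewrite ?IHv ?IHw ?IHM ?IHN ?up_comp //.
by congr Op; apply: functional_extensionality => i; apply: IHf.
Qed.

Lemma up_Var : up Var = Var :> (nat -> vl).
Proof. by apply: functional_extensionality; case. Qed.

Lemma subst_Var :
  (forall M : tm, subst_tm Var M = M) /\ (forall v : vl, subst_vl Var v = v).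
Proof.
apply: tm_vl_mutind => [v IHv|v IHv w IHw|M IHM N IHN|s f IHf|x|M IHM] /=;
  rewrite ?up_Var ?IHv ?IHw ?IHM ?IHN //.
by congr Op; apply: functional_extensionality => i; apply: IHf.
Qed.

Lemma upren_lt n k xi :
  (forall i, i < n -> xi i < k) -> forall i, i < n.+1 -> upren xi i < k.+1.
Proof. by move=> hxi [|i] //= /hxi. Qed.

Lemma ren_sc :
  (forall (M : tm) n k xi, tm_sc n M -> (forall i, i < n -> xi i < k) ->
     tm_sc k (ren_tm xi M)) /\
  (forall (v : vl) n k xi, vl_sc n v -> (forall i, i < n -> xi i < k) ->
     vl_sc k (ren_vl xi v)).
Proof.
apply: tm_vl_mutind => [v IHv|v IHv w IHw|M IHM N IHN|s f IHf|x|M IHM] n k xi /=.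
- exact: IHv.
- by case/andP=> /IHv hv /IHw hw hxi; rewrite hv ?hw.
- by case/andP=> /IHM hM /IHN hN hxi; rewrite hM ?hN //; apply: upren_lt.
- by move=> /forallP hf hxi; apply/forallP => i; apply: IHf (hf i) hxi.
- by move=> /[swap] hxi; apply: hxi.
- by move=> /IHM hM hxi; apply/hM/upren_lt.
Qed.

Lemma up_sc n k (sg : nat -> vl) :
  (forall i, i < n -> vl_sc k (sg i)) -> forall i, i < n.+1 -> vl_sc k.+1 (up sg i).
Proof. by move=> hsg [|i] //= /hsg hi; apply: (proj2 ren_sc) hi _. Qed.

Lemma subst_sc :
  (forall (M : tm) n k sg, tm_sc n M -> (forall i, i < n -> vl_sc k (sg i)) ->
     tm_sc k (subst_tm sg M)) /\
  (forall (v : vl) n k sg, vl_sc n v -> (forall i, i < n -> vl_sc k (sg i)) ->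
     vl_sc k (subst_vl sg v)).
Proof.
apply: tm_vl_mutind => [v IHv|v IHv w IHw|M IHM N IHN|s f IHf|x|M IHM] n k sg /=.
- exact: IHv.
- by case/andP=> /IHv hv /IHw hw hsg; rewrite hv ?hw.
- by case/andP=> /IHM hM /IHN hN hsg; rewrite hM ?hN //; apply: up_sc.
- by move=> /forallP hf hsg; apply/forallP => i; apply: IHf (hf i) hsg.
- by move=> /[swap] hsg; apply: hsg.
- by move=> /IHM hM hsg; apply/hM/up_sc.
Qed.

Lemma up_eq n (sg sg' : nat -> vl) :
  (forall i, i < n -> sg i = sg' i) -> forall i, i < n.+1 -> up sg i = up sg' i.
Proof. by move=> hsg [|i] //= /hsg ->. Qed.

Lemma eq_subst :
  (forall (M : tm) n sg sg', tm_sc n M -> (forall i, i < n -> sg i = sg' i) ->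
     subst_tm sg M = subst_tm sg' M) /\
  (forall (v : vl) n sg sg', vl_sc n v -> (forall i, i < n -> sg i = sg' i) ->
     subst_vl sg v = subst_vl sg' v).
Proof.
apply: tm_vl_mutind => [v IHv|v IHv w IHw|M IHM N IHN|s f IHf|x|M IHM] n sg sg' /=.
- by move=> /IHv hv hsg; rewrite (hv _ _ hsg).
- by case/andP=> /IHv hv /IHw hw hsg; rewrite (hv _ _ hsg) (hw _ _ hsg).
- by case/andP=> /IHM hM /IHN hN hsg; rewrite (hM _ _ hsg) (hN _ _ (up_eq hsg)).
- move=> /forallP hf hsg; congr Op; apply: functional_extensionality => i.
  exact: IHf (hf i) hsg.
- by move=> /[swap] hsg; apply: hsg.
- by move=> /IHM hM hsg; rewrite (hM _ _ (up_eq hsg)).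
Qed.

Lemma closed_subst_tm (M : tm) sg : tm_closed M -> subst_tm sg M = M.
Proof.
by move=> hM; rewrite -[RHS](proj1 subst_Var); apply: (proj1 eq_subst) hM _.
Qed.

Lemma closed_subst_vl (v : vl) sg : vl_closed v -> subst_vl sg v = v.
Proof.
by move=> hv; rewrite -[RHS](proj2 subst_Var); apply: (proj2 eq_subst) hv _.
Qed.

End Substitution.

Section Denotation.
Variables (Sg : Type) (ar : Sg -> nat) (m : MonadData ar).
Hypotheses (Hcppo : is_wcppo m) (Hbind : bind_continuous m) (Hops : ops_continuous m).
Notation tm := (tm ar).
Notation cvl := (cvl ar).

Lemma leT_refl X (u : T m X) : le m u u.
Proof. exact: (Hcppo X).1. Qed.

Lemma leT_trans X (u v w : T m X) : le m u v -> le m v w -> le m u w.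
Proof. exact: (Hcppo X).2.1. Qed.

Lemma leT_anti X (u v : T m X) : le m u v -> le m v u -> u = v.
Proof. exact: (Hcppo X).2.2.1. Qed.

Lemma bot_leT X (u : T m X) : le m (bot m) u.
Proof. exact: (Hcppo X).2.2.2.1. Qed.

Lemma lub_ub X (c : nat -> T m X) n : chain c -> le m (c n) (lub m c).
Proof. by move=> hc; apply: ((Hcppo X).2.2.2.2 c hc).1. Qed.

Lemma lub_least X (c : nat -> T m X) u :
  chain c -> (forall n, le m (c n) u) -> le m (lub m c) u.
Proof. by move=> hc; apply: ((Hcppo X).2.2.2.2 c hc).2. Qed.

Lemma chain_homo X (c : nat -> T m X) n k : chain c -> n <= k -> le m (c n) (c k).
Proof.
move=> hc; elim: k => [|k IHk]; first by rewrite leqn0 => /eqP ->; apply: leT_refl.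
rewrite leq_eqVlt => /orP [/eqP -> | /IHk hnk]; first exact: leT_refl.
exact: leT_trans hnk (hc k).
Qed.

Lemma lub_shift X (c : nat -> T m X) : chain c -> lub m (fun n => c n.+1) = lub m c.
Proof.
move=> hc; have hc1 : chain (fun n => c n.+1) by move=> n; apply: hc.
apply: leT_anti; apply: lub_least => // n; first exact: lub_ub.
exact: leT_trans (hc n) (lub_ub _ hc1).
Qed.

Lemma lub_const X (u : T m X) : lub m (fun _ => u) = u.
Proof.
have hc : chain (fun _ : nat => u) by move=> n; apply: leT_refl.
apply: leT_anti; first by apply: lub_least => // n; apply: leT_refl.
exact: (lub_ub 0 hc).
Qed.

Lemma lub_diag X (b : nat -> nat -> T m X) :
  (forall n k, le m (b n k) (b n.+1 k)) -> (forall n k, le m (b n k) (b n k.+1)) ->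
  lub m (fun n => lub m (b n)) = lub m (fun n => b n n).
Proof.
move=> hb1 hb2.
have hrow n : chain (b n) by move=> k; apply: hb2.
have hcol k : chain (b^~ k) by move=> n; apply: hb1.
have hdiag : chain (fun n => b n n) by move=> n; apply: leT_trans (hb1 n n) (hb2 _ _).
have hlubs : chain (fun n => lub m (b n)).
  move=> n; apply: lub_least => // k.
  exact: leT_trans (hb1 n k) (lub_ub _ (hrow n.+1)).
apply: leT_anti; apply: lub_least => // n.
- apply: lub_least => // k.
  apply: leT_trans (chain_homo (hcol k) (leq_maxl n k)) _.
  apply: leT_trans (chain_homo (hrow (maxn n k)) (leq_maxr n k)) _.
  exact: (lub_ub (maxn n k) hdiag).
- exact: leT_trans (lub_ub n (hrow n)) (lub_ub n hlubs).
Qed.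

Lemma approx_chain (M : tm) : chain (fun n => approx m n M).
Proof.
case: Hbind => bind_homo_l [bind_homo_r _]; case: Hops => op_homo _.
move=> n; elim: n M => [|n IHn] M; first exact: bot_leT.
case: M => [v | [x|M] w | M N | s Ms] /=.
- by case: insub => *; apply: leT_refl.
- exact: leT_refl.
- exact: IHn.
- by apply: leT_trans (bind_homo_l _ _ _ _ _ (IHn M)) _; apply: bind_homo_r.
- by apply: op_homo.
Qed.

Lemma denot_ret (V : cvl) : denot m (Ret (val V)) = ret m V.
Proof.
rewrite /denot -(lub_shift (approx_chain _)) /=.
by case: V => v hv; rewrite (insubT (fun v => vl_closed v) hv) lub_const.
Qed.

Lemma denot_app (M : tm) v : denot m (App (Lam M) v) = denot m (subst1 M v).
Proof. by rewrite /denot -(lub_shift (approx_chain _)). Qed.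

Lemma denot_op s (Ms : 'I_(ar s) -> tm) :
  denot m (Op Ms) = op m s (fun i => denot m (Ms i)).
Proof.
rewrite /denot -(lub_shift (approx_chain _)) /=.
by rewrite Hops.2 // => i; apply: approx_chain.
Qed.

Lemma denot_seq (M N : tm) :
  denot m (Seq M N) = bind m (denot m M) (fun V : cvl => denot m (subst1 N (val V))).
Proof.
case: Hbind => bind_homo_l [bind_homo_r [bind_lub_l bind_lub_r]].
pose b n k := bind m (approx m n M) (fun V : cvl => approx m k (subst1 N (val V))).
have -> : denot m (Seq M N) = lub m (fun n => b n n).
  by rewrite /denot -(lub_shift (approx_chain _)).
rewrite /denot (bind_lub_l _ _ _ _ (approx_chain _)) -lub_diag.
- congr lub; apply: functional_extensionality => n.
  by rewrite bind_lub_r // => V; apply: approx_chain.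
- by move=> n k; apply: bind_homo_l; apply: approx_chain.
- by move=> n k; apply: bind_homo_r => V; apply: approx_chain.
Qed.

End Denotation.

Scheme howeT_mutind := Minimality for howeT Sort Prop
  with howeV_mutind := Minimality for howeV Sort Prop.
Combined Scheme howe_mutind from howeT_mutind, howeV_mutind.

Section Howe.
Variables (Sg : Type) (ar : Sg -> nat) (m : MonadData ar) (G : RelatorT m).
Hypothesis G_eq : forall X (u : T m X), G (@eq X) u u.
Hypothesis G_comp : forall X Y Z (R : X -> Y -> Prop) (R' : Y -> Z -> Prop) u v w,
  G R u v -> G R' v w -> G (fun x z => exists y, R x y /\ R' y z) u w.
Hypothesis G_mono : forall X Y (R R' : X -> Y -> Prop),
  (forall x y, R x y -> R' x y) -> forall u v, G R u v -> G R' u v.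
Notation tm := (tm ar).
Notation vl := (vl ar).
Notation cvl := (cvl ar).
Notation simT := (simT G).
Notation simV := (simV G).
Notation openT := (openT G).
Notation openV := (openV G).
Notation howeT := (howeT G).
Notation howeV := (howeV G).

Lemma simV_closed v w : simV v w -> vl_closed v /\ vl_closed w.
Proof. by case=> RT [RV [[[_ closedV] _] /closedV]]. Qed.

Lemma simT_denot M N : simT M N -> G (liftV simV) (denot m M) (denot m N).
Proof.
case=> RT [RV [[? [denotT ?]] /denotT hMN]].
by apply: G_mono hMN => V W hVW; exists RT, RV.
Qed.

Lemma simV_app v w (U : cvl) : simV v w -> simT (App v (val U)) (App w (val U)).
Proof. by case=> RT [RV [simRV hvw]]; exists RT, RV; split; last exact: simRV.2.2. Qed.

Lemma app_simulation_id :
  app_simulation G (fun M N => M = N /\ tm_closed M) (fun v w => v = w /\ vl_closed v).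
Proof.
split; [by split=> [M N|v w] [-> ?] | split].
- move=> M N [-> _]; apply: G_mono (G_eq _) => V W ->; split=> //; exact: valP.
- by move=> v w [-> hv] U; split=> //; apply/andP; split; [exact: hv | exact: valP].
Qed.

Lemma simV_refl v : vl_closed v -> simV v v.
Proof. by move=> hv; do 2 eexists; split; [exact: app_simulation_id | split]. Qed.

Lemma app_simulation_comp RT1 RV1 RT2 RV2 :
  app_simulation G RT1 RV1 -> app_simulation G RT2 RV2 ->
  app_simulation G (fun M L => exists N, RT1 M N /\ RT2 N L)
                   (fun v u => exists w, RV1 v w /\ RV2 w u).
Proof.
move=> [[cT1 cV1] [dT1 aV1]] [[cT2 cV2] [dT2 aV2]].
split; [split|split].
- by move=> M L [N [/cT1 [? _] /cT2 [_ ?]]].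
- by move=> v u [w [/cV1 [? _] /cV2 [_ ?]]].
- move=> M L [N [/dT1 hMN /dT2 hNL]].
  by apply: G_mono (G_comp hMN hNL) => V U [W [hVW hWU]]; exists (val W).
- move=> v u [w [/aV1 hvw /aV2 hwu]] U.
  by exists (App w (val U)); split; [apply: hvw | apply: hwu].
Qed.

Lemma simT_trans M N L : simT M N -> simT N L -> simT M L.
Proof.
case=> RT1 [RV1 [sim1 hMN]] [RT2 [RV2 [sim2 hNL]]].
by do 2 eexists; split; [exact: app_simulation_comp sim1 sim2 | exists N].
Qed.

Lemma simV_trans v w u : simV v w -> simV w u -> simV v u.
Proof.
case=> RT1 [RV1 [sim1 hvw]] [RT2 [RV2 [sim2 hwu]]].
by do 2 eexists; split; [exact: app_simulation_comp sim1 sim2 | exists w].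
Qed.

Lemma openT_trans n M N L : openT n M N -> openT n N L -> openT n M L.
Proof.
move=> [hM [_ hMN]] [_ [hL hNL]].
by split; [|split=> // sv; apply: simT_trans (hMN sv) (hNL sv)].
Qed.

Lemma openV_trans n v w u : openV n v w -> openV n w u -> openV n v u.
Proof.
move=> [hv [_ hvw]] [_ [hu hwu]].
by split; [|split=> // sv; apply: simV_trans (hvw sv) (hwu sv)].
Qed.

Definition cvl_id : cvl := exist _ (Lam (Ret (Var 0))) isT.

Lemma openT0_simT M N : openT 0 M N -> simT M N.
Proof. by move=> [hM [hN /(_ (fun=> cvl_id))]]; rewrite !closed_subst_tm. Qed.

Lemma openV0_simV v w : openV 0 v w -> simV v w.
Proof. by move=> [hv [hw /(_ (fun=> cvl_id))]]; rewrite !closed_subst_vl. Qed.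

Lemma simV_openV0 v w : simV v w -> openV 0 v w.
Proof.
move=> hvw; have [hv hw] := simV_closed hvw.
by split; [|split=> // sv]; rewrite ?closed_subst_vl.
Qed.

Lemma openT_ren n k xi M N : openT n M N -> (forall i, i < n -> xi i < k) ->
  openT k (ren_tm xi M) (ren_tm xi N).
Proof.
move=> [hM [hN hMN]] hxi; split; first exact: (proj1 (ren_sc ar)) hM hxi.
split; first exact: (proj1 (ren_sc ar)) hN hxi.
by move=> sv; rewrite !(proj1 (subst_ren ar)); apply: hMN.
Qed.

Lemma openV_ren n k xi v w : openV n v w -> (forall i, i < n -> xi i < k) ->
  openV k (ren_vl xi v) (ren_vl xi w).
Proof.
move=> [hv [hw hvw]] hxi; split; first exact: (proj2 (ren_sc ar)) hv hxi.
split; first exact: (proj2 (ren_sc ar)) hw hxi.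
by move=> sv; rewrite !(proj2 (subst_ren ar)); apply: hvw.
Qed.

Lemma closing_subst_comp n k (tau : nat -> vl) (sv : nat -> cvl) :
  (forall i, i < n -> vl_sc k (tau i)) ->
  exists sv' : nat -> cvl,
    forall i, i < n -> subst_vl (fun j => val (sv j)) (tau i) = val (sv' i).
Proof.
move=> htau; exists (fun i => insubd cvl_id (subst_vl (fun j => val (sv j)) (tau i))).
move=> i /htau hi; rewrite /insubd insubT //=.
by apply: (proj2 (subst_sc ar)) hi _ => j _; apply: valP.
Qed.

Lemma openT_subst n k tau M N : openT n M N -> (forall i, i < n -> vl_sc k (tau i)) ->
  openT k (subst_tm tau M) (subst_tm tau N).
Proof.
move=> [hM [hN hMN]] htau; split; first exact: (proj1 (subst_sc ar)) hM htau.
split=> [|sv]; first exact: (proj1 (subst_sc ar)) hN htau.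
have [sv' hsv'] := closing_subst_comp sv htau.
rewrite !(proj1 (subst_subst ar)) (proj1 (eq_subst ar) _ _ _ _ hM hsv').
by rewrite (proj1 (eq_subst ar) _ _ _ _ hN hsv'); apply: hMN.
Qed.

Lemma openV_subst n k tau v w : openV n v w -> (forall i, i < n -> vl_sc k (tau i)) ->
  openV k (subst_vl tau v) (subst_vl tau w).
Proof.
move=> [hv [hw hvw]] htau; split; first exact: (proj2 (subst_sc ar)) hv htau.
split=> [|sv]; first exact: (proj2 (subst_sc ar)) hw htau.
have [sv' hsv'] := closing_subst_comp sv htau.
rewrite !(proj2 (subst_subst ar)) (proj2 (eq_subst ar) _ _ _ _ hv hsv').
by rewrite (proj2 (eq_subst ar) _ _ _ _ hw hsv'); apply: hvw.
Qed.

Lemma openV_Var0 n : openV n.+1 (Var 0) (Var 0).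
Proof. by split=> //; split=> // sv; apply/simV_refl/valP. Qed.

Lemma howeV_openV n v w u : howeV n v w -> openV n w u -> howeV n v u.
Proof.
case=> [{}n x {}w hx hxw|{}n M N {}w hMN hNw] hwu.
- exact: H1 hx (openV_trans hxw hwu).
- exact: H2 hMN (openV_trans hNw hwu).
Qed.

Lemma howe_sc :
  (forall n M N, howeT n M N -> tm_sc n M /\ tm_sc n N) /\
  (forall n v w, howeV n v w -> vl_sc n v /\ vl_sc n w).
Proof.
apply: howe_mutind => /=.
- by move=> n V W N _ [hV _] [_ [hN _]]; split.
- by move=> n V V' W W' N _ [hV _] _ [hW _] [_ [hN _]]; rewrite hV hW.
- by move=> n M L M' L' N _ [hM _] _ [hM' _] [_ [hN _]]; rewrite hM hM'.
- by move=> n s Ms Ns N _ hMs [_ [hN _]]; split=> //; apply/forallP => i; case: (hMs i).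
- by move=> n x V hx [_ [hV _]].
- by move=> n M L V _ [hM _] [_ [hV _]].
Qed.

Lemma howe_ren :
  (forall n M N, howeT n M N -> forall k xi, (forall i, i < n -> xi i < k) ->
     howeT k (ren_tm xi M) (ren_tm xi N)) /\
  (forall n v w, howeV n v w -> forall k xi, (forall i, i < n -> xi i < k) ->
     howeV k (ren_vl xi v) (ren_vl xi w)).
Proof.
apply: howe_mutind => /=.
- move=> n V W N _ IHV hWN k xi hxi.
  exact: H3 (IHV _ _ hxi) (openT_ren hWN hxi).
- move=> n V V' W W' N _ IHV _ IHW hN k xi hxi.
  exact: H4 (IHV _ _ hxi) (IHW _ _ hxi) (openT_ren hN hxi).
- move=> n M L M' L' N _ IHM _ IHM' hN k xi hxi.
  exact: H5 (IHM _ _ hxi) (IHM' _ _ (upren_lt hxi)) (openT_ren hN hxi).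
- move=> n s Ms Ns N _ IHMs hN k xi hxi.
  exact: H6 (fun i => IHMs i _ _ hxi) (openT_ren hN hxi).
- move=> n x V hx hxV k xi hxi.
  exact: H1 (hxi _ hx) (openV_ren hxV hxi).
- move=> n M L V _ IHM hLV k xi hxi.
  exact: H2 (IHM _ _ (upren_lt hxi)) (openV_ren hLV hxi).
Qed.

Lemma howeV_up n k (sg tau : nat -> vl) :
  (forall i, i < n -> howeV k (sg i) (tau i)) ->
  forall i, i < n.+1 -> howeV k.+1 (up sg i) (up tau i).
Proof.
move=> hsg [|i] /= hi; first exact: H1 (openV_Var0 k).
by apply: (proj2 howe_ren) (hsg _ hi) _ _ _.
Qed.

Lemma howe_subst :
  (forall n M N, howeT n M N -> forall k (sg tau : nat -> vl),
     (forall i, i < n -> howeV k (sg i) (tau i)) ->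
     howeT k (subst_tm sg M) (subst_tm tau N)) /\
  (forall n v w, howeV n v w -> forall k (sg tau : nat -> vl),
     (forall i, i < n -> howeV k (sg i) (tau i)) ->
     howeV k (subst_vl sg v) (subst_vl tau w)).
Proof.
have tau_sc n k (sg tau : nat -> vl) : (forall i, i < n -> howeV k (sg i) (tau i)) ->
    forall i, i < n -> vl_sc k (tau i).
  by move=> hsg i /hsg /(proj2 howe_sc) [].
apply: howe_mutind => /=.
- move=> n V W N _ IHV hWN k sg tau hsg.
  exact: H3 (IHV _ _ _ hsg) (openT_subst hWN (tau_sc _ _ _ _ hsg)).
- move=> n V V' W W' N _ IHV _ IHW hN k sg tau hsg.
  exact: H4 (IHV _ _ _ hsg) (IHW _ _ _ hsg) (openT_subst hN (tau_sc _ _ _ _ hsg)).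
- move=> n M L M' L' N _ IHM _ IHM' hN k sg tau hsg.
  exact: H5 (IHM _ _ _ hsg) (IHM' _ _ _ (howeV_up hsg)) (openT_subst hN (tau_sc _ _ _ _ hsg)).
- move=> n s Ms Ns N _ IHMs hN k sg tau hsg.
  exact: H6 (fun i => IHMs i _ _ _ hsg) (openT_subst hN (tau_sc _ _ _ _ hsg)).
- move=> n x V hx hxV k sg tau hsg.
  exact: howeV_openV (hsg _ hx) (openV_subst hxV (tau_sc _ _ _ _ hsg)).
- move=> n M L V _ IHM hLV k sg tau hsg.
  exact: H2 (IHM _ _ _ (howeV_up hsg)) (openV_subst hLV (tau_sc _ _ _ _ hsg)).
Qed.

Lemma howeT_subst1 M N (V W : cvl) :
  howeT 1 M N -> howeV 0 (val V) (val W) -> howeT 0 (subst1 M (val V)) (subst1 N (val W)).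
Proof. by move=> hMN hVW; apply: (proj1 howe_subst) hMN _ _ _ _; case. Qed.

Lemma howeT_inv n M N : howeT n M N ->
  match M with
  | Ret V => exists2 W, howeV n V W & openT n (Ret W) N
  | App V W => exists V' W', [/\ howeV n V V', howeV n W W' & openT n (App V' W') N]
  | Seq M1 M2 => exists L1 L2, [/\ howeT n M1 L1, howeT n.+1 M2 L2 & openT n (Seq L1 L2) N]
  | @Op _ _ s Ms => exists2 Ns : 'I_(ar s) -> tm,
                      forall i, howeT n (Ms i) (Ns i) & openT n (Op Ns) N
  end.
Proof.
case=> [{}n V W {}N hVW hWN|{}n V V' W W' {}N hVV' hWW' hN|{}n M1 L1 M2 L2 {}N h1 h2 hN
       |{}n s Ms Ns {}N hMNs hN].
- by exists W.
- by exists V', W'.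
- by exists L1, L2.
- by exists Ns.
Qed.

Lemma howeV_Lam_inv n M v : howeV n (Lam M) v ->
  exists2 L, howeT n.+1 M L & openV n (Lam L) v.
Proof. by move=> h; inversion h; exists L. Qed.

Hypotheses (Hcppo : is_wcppo m) (Hbind : bind_continuous m) (Hops : ops_continuous m).
(* Evaluation is finite, so of inductivity only the clause for [bot] is used. *)
Hypothesis G_bot : forall X Y (R : X -> Y -> Prop) v, G R (bot m) v.
Hypothesis G_ret : forall X Y (R : X -> Y -> Prop) x y, R x y -> G R (ret m x) (ret m y).
Hypothesis G_bind : forall X Y X' Y' (R : X -> Y -> Prop) (R' : X' -> Y' -> Prop)
    (f : X -> T m X') (g : Y -> T m Y') u v,
  (forall x y, R x y -> G R' (f x) (g y)) -> G R u v -> G R' (bind m u f) (bind m v g).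
Hypothesis G_op : relator_respects_sig G.

Lemma howe_rel_simT X N' N :
  G (liftV (howeV 0)) X (denot m N') -> simT N' N -> G (liftV (howeV 0)) X (denot m N).
Proof.
move=> hXN' /simT_denot hN'N; apply: G_mono (G_comp hXN' hN'N) => V W [U [hVU hUW]].
exact: howeV_openV hVU (simV_openV0 hUW).
Qed.

Lemma eval_howeT M n X : eval m M n X ->
  forall N, howeT 0 M N -> G (liftV (howeV 0)) X (denot m N).
Proof.
elim=> {M n X} [M N _ | V n N /howeT_inv [W hVW hWN]
               | M1 M2 n X Y _ IH1 _ IH2 N /howeT_inv [L1 [L2 [h1 h2 hL]]]
               | M V n X _ IH N /howeT_inv [V' [W' [/howeV_Lam_inv [L hML hLV'] hVW' hN]]]
               | s Ms n Xs _ IH N /howeT_inv [Ns hMNs hN]].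
- exact: G_bot.
- have [_ hW] := proj2 howe_sc _ _ _ hVW.
  apply: (@howe_rel_simT _ (Ret (val (exist _ W hW : cvl)))); last exact: openT0_simT.
  by rewrite denot_ret //; apply: G_ret.
- apply: howe_rel_simT (openT0_simT hL).
  rewrite denot_seq //; apply: G_bind (IH1 _ h1) => V W hVW.
  exact/IH2/howeT_subst1.
- have [_ hW'] := proj2 howe_sc _ _ _ hVW'.
  pose W : cvl := exist _ W' hW'.
  apply: (@howe_rel_simT _ (App (Lam L) (val W))).
    by rewrite denot_app //; apply/IH/howeT_subst1.
  exact: simT_trans (simV_app W (openV0_simV hLV')) (openT0_simT hN).
- apply: howe_rel_simT (openT0_simT hN).
  by rewrite denot_op //; apply: G_op => i; apply: IH.
Qed.

End Howe.

Theorem mainTheorem8 (Sg : Type) (ar : Sg -> nat) (m : MonadData ar)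
  (G : RelatorT m) :
  cont_sigma_monad m ->
  is_relator G -> relator_inductive G -> relator_respects_sig G ->
  forall (M N : tm ar) (n : nat) (X : T m (cvl ar)),
    tm_closed M -> tm_closed N ->
    howeT G 0 M N -> eval m M n X ->
    G (cvl ar) (cvl ar) (fun V W => howeV G 0 (val V) (val W)) X (denot m N).
Proof.
move=> [_ [Hcppo [Hbind Hops]]] [G_eq [G_comp [_ [G_mono [G_ret G_bind]]]]] G_ind G_op.
(* closedness of [M] and [N] is already implied by [howeT G 0 M N] *)
move=> M N n X _ _ hMN hM.
have G_bot X' Y (R : X' -> Y -> Prop) v : G _ _ R (bot m) v by apply: (G_ind X' Y R).1.
exact (eval_howeT G_eq G_comp G_mono Hcppo Hbind Hops G_bot G_ret G_bind G_op hM hMN).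
Qed.
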